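(* Let $q$ be a prime with $q \equiv 1 \pmod 6$ or $q = 3$. Let $j \in \{3,6\}$ and let $s$ be an integer with $0 \le s < q$ such that $\Phi_j(s) \equiv 0 \pmod q$, where $\Phi_3(x) = x^2+x+1$ and $\Phi_6(x) = x^2-x+1$. Define $p_6(x) = \Phi_4(qx+s) = (qx+s)^2+1 \in \mathbb{Z}[x]$, \[ n_6(x)= \begin{cases} qx^2+(2s+1)x+\Phi_3(s)/q, & \text{if } q \mid \Phi_3(s),\\ qx^2+(2s-1)x+\Phi_6(s)/q, & \text{if } q \mid \Phi_6(s),\end{cases} \qquad t_6(x)= \begin{cases} 1-qx-s, & \text{if } q \mid \Phi_3(s),\\ 1+qx+s, & \text{if } q \mid \Phi_6(s).\end{cases} \] Then: (i) $q\,n_6(x) = p_6(x)+1-t_6(x)$; (ii) $q\,n_6(x)$ divides $\Phi_6(p_6(x))$ in $\mathbb{Z}[x]$; (iii) $t_6(x)^2-4p_6(x) \le 0$ for all $x$; (iv) $n_6(x)$ and $p_6(x)$ are irreducible over $\mathbb{Z}$; that is, $(n_6(x),p_6(x),t_6(x))$ parameterizes a family of generalized MNT elliptic curves with embedding degree $6$ in the sense described in the context. Moreover, for every integer $x$, if one writes $t_6(x)^2-4p_6(x) = \Delta Y^2$ with $\Delta<0$ a square-free integer and $Y \in \mathbb{Z}$, then \[ X^2 + 3\Delta Y^2 = -8, \qquad \text{where } X = \begin{cases} 3(qx+s)+1, & \text{if } q \mid \Phi_3(s),\\ 3(qx+s)-1, & \text{if } q \mid \Phi_6(s).\end{cases}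 \]
   Context: $\Phi_k(x)$ denotes the $k$th cyclotomic polynomial; $\Phi_3(x)=x^2+x+1$, $\Phi_4(x)=x^2+1$, $\Phi_6(x)=x^2-x+1$. A polynomial in $\mathbb{Z}[x]$ is called irreducible over $\mathbb{Z}$ if it is not a product of two non-constant polynomials with integer coefficients. For $k\in\{3,4,6\}$ and a prime $q$, a triple $(n_k(x),p_k(x),t_k(x))$ of polynomials in $\mathbb{Z}[x]$ is said to parameterize a family of generalized MNT elliptic curves with embedding degree $k$ if $q\,n_k(x) = p_k(x)+1-t_k(x)$, $q\,n_k(x) \mid \Phi_k(p_k(x))$, $t_k(x)^2-4p_k(x) \le 0$, and $n_k(x), p_k(x)$ are irreducible over $\mathbb{Z}$. (The paper's definition is stated for primes $q \equiv 1 \pmod k$, but the theorem is asserted also for $q=3$; the conclusion is therefore written out as the four listed properties.) *)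

From mathcomp Require Import all_boot all_order all_algebra.
Set Implicit Arguments. Unset Strict Implicit. Unset Printing Implicit Defensive.
Import Order.TTheory GRing.Theory Num.Theory.
Local Open Scope ring_scope.

Definition Phi3 : {poly int} := 'X^2 + 'X + 1.
Definition Phi4 : {poly int} := 'X^2 + 1.
Definition Phi6 : {poly int} := 'X^2 - 'X + 1.

Definition irreducible_Z (f : {poly int}) : Prop :=
  forall a b : {poly int}, f = a * b -> (size a <= 1)%N \/ (size b <= 1)%N.

Definition squarefree_int (D : int) : Prop :=
  forall d : int, (d * d %| D)%Z -> d = 1 \/ d = -1.

Definition p6 (q : nat) (s : int) : {poly int} :=
  Phi4 \Po ((q%:Z)%:P * 'X + s%:P).

Definition n6 (q : nat) (s : int) : {poly int} :=
  if (q%:Z %| Phi3.[s])%Z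
  then (q%:Z)%:P * 'X^2 + (2 * s + 1)%:P * 'X + ((Phi3.[s] %/ q%:Z)%Z)%:P
  else (q%:Z)%:P * 'X^2 + (2 * s - 1)%:P * 'X + ((Phi6.[s] %/ q%:Z)%Z)%:P.

Definition t6 (q : nat) (s : int) : {poly int} :=
  if (q%:Z %| Phi3.[s])%Z
  then 1 - (q%:Z)%:P * 'X - s%:P
  else 1 + (q%:Z)%:P * 'X + s%:P.

Definition X6 (q : nat) (s x : int) : int :=
  if (q%:Z %| Phi3.[s])%Z
  then 3 * (q%:Z * x + s) + 1
  else 3 * (q%:Z * x + s) - 1.

From mathcomp Require Import all_boot all_order all_algebra.
From mathcomp Require Import ring zify.
Import Order.TTheory GRing.Theory Num.Theory.
Local Open Scope ring_scope.

(* Put u = q x + s and let e = 1 if q | Phi3(s) and e = -1 otherwise (then q | Phi6(s)).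
   Then q n = u^2 + e u + 1, p = u^2 + 1 and t = 1 - e u, and since e^2 = 1:
   Phi6(p) = u^4 + u^2 + 1 = (u^2 + e u + 1)(u^2 - e u + 1),
   t^2 - 4p = -(2u^2 + (u + e)^2 + 2) <= 0 and (3u + e)^2 + 3(t^2 - 4p) = -8,
   so the CM equation holds whatever the decomposition t^2 - 4p = D Y^2.
   Finally n and p are integer quadratics of discriminants -3 and -4q^2. *)

Lemma coef_quadratic {R : nzRingType} (a b c : R) i :
  (a%:P * 'X^2 + b%:P * 'X + c%:P)`_i = [:: c; b; a]`_i.
Proof.
by rewrite !coefD !coefCM coefXn coefX coefC; case: i => [|[|[|i]]] /=;
  rewrite ?mulr0 ?mulr1 ?addr0 ?add0r ?nth_nil.
Qed.

Lemma size_quadratic {R : nzRingType} (a b c : R) :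
  (size (a%:P * 'X^2 + b%:P * 'X + c%:P)%R <= 3)%N.
Proof. by apply/leq_sizeP => i le3i; rewrite coef_quadratic nth_default. Qed.

Lemma discr_mul_linear (R : comNzRingType) (f g : {poly R}) :
  (size f <= 2)%N -> (size g <= 2)%N ->
  (f * g)`_1 ^+ 2 - 4 * (f * g)`_2 * (f * g)`_0 = (f`_1 * g`_0 - f`_0 * g`_1) ^+ 2.
Proof.
move=> size_f size_g; rewrite !coefM !big_ord_recr !big_ord0 /=.
by rewrite !(nth_default 0 size_f) !(nth_default 0 size_g); ring.
Qed.

(* A factorisation into two linear factors would make the discriminant a square. *)
Lemma irreducible_Z_quadratic (a b c : int) :
  b ^+ 2 - 4 * a * c < 0 -> irreducible_Z (a%:P * 'X^2 + b%:P * 'X + c%:P).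
Proof.
move=> discr_lt0 f g fg.
case: (leqP (size f) 1) => [|f_gt1]; first by left.
case: (leqP (size g) 1) => [|g_gt1]; first by right.
have f_neq0 : f != 0 by rewrite -size_poly_gt0 ltnW.
have g_neq0 : g != 0 by rewrite -size_poly_gt0 ltnW.
have [size_f size_g] : (size f <= 2)%N /\ (size g <= 2)%N.
  have := size_quadratic a b c; rewrite fg size_mul // -subn1.
  (* [set] merges occurrences of [size f] reached through different coercion
     paths, which lia would otherwise treat as distinct atoms. *)
  by move: f_gt1 g_gt1; set m := size f; set n := size g; lia.
have := coef_quadratic a b c; rewrite fg => coef_fg.
have coef0 : (f * g)`_0 = c := coef_fg 0%N.
have coef1 : (f * g)`_1 = b := coef_fg 1%N.
have coef2 : (f * g)`_2 = a := coef_fg 2%N.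
move: discr_lt0; rewrite -coef0 -coef1 -coef2.
by rewrite discr_mul_linear // ltNge sqr_ge0.
Qed.

Lemma comp_Phi4 (u : {poly int}) : Phi4 \Po u = u ^+ 2 + 1.
Proof. by rewrite /Phi4 rmorphD rmorphXn rmorph1 /= comp_polyX. Qed.

Lemma comp_Phi6 (u : {poly int}) : Phi6 \Po u = u ^+ 2 - u + 1.
Proof. by rewrite /Phi6 rmorphD rmorphB rmorphXn rmorph1 /= comp_polyX. Qed.

Section MNT6Identities.
Variables (R : comPzRingType) (e u : R).
Hypothesis e_sq : e ^+ 2 = 1.

Lemma Phi6_comp_Phi4_factor :
  (u ^+ 2 + 1) ^+ 2 - (u ^+ 2 + 1) + 1 = (u ^+ 2 + e * u + 1) * (u ^+ 2 - e * u + 1).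
Proof. by ring: e_sq. Qed.

Lemma mnt6_discr : (1 - e * u) ^+ 2 - 4 * (u ^+ 2 + 1) = - (3 * u ^+ 2 + 2 * e * u + 3).
Proof. by ring: e_sq. Qed.

Lemma mnt6_cm_eq : (3 * u + e) ^+ 2 + 3 * ((1 - e * u) ^+ 2 - 4 * (u ^+ 2 + 1)) = -8.
Proof. by ring: e_sq. Qed.

End MNT6Identities.

Lemma mnt6_discr_le0 (R : realDomainType) (e u : R) :
  e ^+ 2 = 1 -> (1 - e * u) ^+ 2 - 4 * (u ^+ 2 + 1) <= 0.
Proof.
move=> e_sq; rewrite mnt6_discr // oppr_le0.
have -> : 3 * u ^+ 2 + 2 * e * u + 3 = 2 * u ^+ 2 + (u + e) ^+ 2 + 2 by ring: e_sq.
by rewrite !addr_ge0 ?sqr_ge0 // mulr_ge0 ?sqr_ge0.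
Qed.

Section MNT6Family.
Variables (q : nat) (s e c : int).
Hypotheses (e_sq : e ^+ 2 = 1) (cq : c * q%:Z = s ^+ 2 + e * s + 1).

Local Notation Q := (q%:Z).
Local Notation U := (Q%:P * 'X + s%:P).
Local Notation N := (Q%:P * 'X^2 + (2 * s + e)%:P * 'X + c%:P).
Local Notation T := (1 - e%:P * U).

Lemma mnt6_qnE : Q%:P * N = U ^+ 2 + e%:P * U + 1.
Proof. by rewrite !mulrDr -polyCM [Q * c]mulrC cq; ring. Qed.

Lemma mnt6_trace : Q%:P * N = p6 q s + 1 - T.
Proof. by rewrite mnt6_qnE /p6 comp_Phi4; ring. Qed.

Lemma mnt6_Phi6_dvd : exists r : {poly int}, Phi6 \Po p6 q s = (Q%:P * N) * r.
Proof.
have eP_sq : e%:P ^+ 2 = 1 :> {poly int} by rewrite -polyC_exp e_sq.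
exists (U ^+ 2 - e%:P * U + 1).
by rewrite comp_Phi6 /p6 comp_Phi4 mnt6_qnE (Phi6_comp_Phi4_factor _ _ _ eP_sq).
Qed.

Lemma horner_mnt6_discr x :
  (T ^+ 2 - 4 * p6 q s).[x] = (1 - e * U.[x]) ^+ 2 - 4 * (U.[x] ^+ 2 + 1).
Proof. by rewrite /p6 comp_Phi4 !hornerE. Qed.

Lemma irreducible_n6 : irreducible_Z N.
Proof.
apply: irreducible_Z_quadratic.
have -> : (2 * s + e) ^+ 2 - 4 * Q * c = e ^+ 2 - 4 by rewrite -mulrA [Q * c]mulrC cq; ring.
by rewrite e_sq.
Qed.

End MNT6Family.

Lemma irreducible_p6 q s : (0 < q)%N -> irreducible_Z (p6 q s).
Proof.
move=> q_gt0; have Q_gt0 : 0 < q%:Z by rewrite ltz_nat.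
have -> : p6 q s = (q%:Z ^+ 2)%:P * 'X^2 + (2 * s * q%:Z)%:P * 'X + (s ^+ 2 + 1)%:P.
  by rewrite /p6 comp_Phi4; ring.
apply: irreducible_Z_quadratic.
have -> : (2 * s * q%:Z) ^+ 2 - 4 * q%:Z ^+ 2 * (s ^+ 2 + 1) = - (4 * q%:Z ^+ 2) by ring.
by rewrite oppr_lt0 mulr_gt0 ?exprn_gt0.
Qed.

Definition mnt6_sign (q : nat) (s : int) : int :=
  if (q%:Z %| Phi3.[s])%Z then 1 else -1.

Lemma mnt6_sign_sq q s : mnt6_sign q s ^+ 2 = 1.
Proof. by rewrite /mnt6_sign; case: ifP; rewrite ?sqrrN expr1n. Qed.

Lemma n6E q s : n6 q s = (q%:Z)%:P * 'X^2 + (2 * s + mnt6_sign q s)%:P * 'X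
  + ((s ^+ 2 + mnt6_sign q s * s + 1) %/ q%:Z)%Z%:P.
Proof. by rewrite /n6 /mnt6_sign /Phi3 /Phi6; case: ifP; rewrite !hornerE ?mul1r ?mulN1r. Qed.

Lemma t6E q s : t6 q s = 1 - (mnt6_sign q s)%:P * ((q%:Z)%:P * 'X + s%:P).
Proof. by rewrite /t6 /mnt6_sign; case: ifP => _; rewrite ?polyCN polyC1; ring. Qed.

Lemma X6E q s x : X6 q s x = 3 * (q%:Z * x + s) + mnt6_sign q s.
Proof. by rewrite /X6 /mnt6_sign; case: ifP. Qed.

Lemma dvdz_mnt6_sign q s :
  (q%:Z %| Phi3.[s])%Z \/ (q%:Z %| Phi6.[s])%Z ->
  (q%:Z %| s ^+ 2 + mnt6_sign q s * s + 1)%Z.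
Proof.
rewrite /mnt6_sign /Phi3 /Phi6 !hornerE; case: ifP => [|_ [] //]; first by rewrite mul1r.
by rewrite mulN1r.
Qed.

Theorem theorem1 (q j : nat) (s : int) :
  prime q ->
  (q %% 6 = 1 \/ q = 3)%N ->
  (j = 3 \/ j = 6)%N ->
  0 <= s < q%:Z ->
  (j = 3%N -> (q%:Z %| Phi3.[s])%Z) ->
  (j = 6%N -> (q%:Z %| Phi6.[s])%Z) ->
  [/\ (q%:Z)%:P * n6 q s = p6 q s + 1 - t6 q s,
      (exists r : {poly int}, Phi6 \Po p6 q s = ((q%:Z)%:P * n6 q s) * r),
      (forall x : int, (t6 q s ^+ 2 - 4 * p6 q s).[x] <= 0),
      irreducible_Z (n6 q s) /\ irreducible_Z (p6 q s)
    & (forall x D Y : int,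
         D < 0 -> squarefree_int D ->
         (t6 q s ^+ 2 - 4 * p6 q s).[x] = D * Y ^+ 2 ->
         X6 q s x ^+ 2 + 3 * D * Y ^+ 2 = -8)].
Proof.
move=> q_prime _ j_cases _ Phi3_dvd Phi6_dvd.
have q_gt0 := prime_gt0 q_prime.
have e_sq := mnt6_sign_sq q s.
have q_dvd : (q%:Z %| s ^+ 2 + mnt6_sign q s * s + 1)%Z.
  apply: dvdz_mnt6_sign.
  by case: j_cases => j_eq; [left; exact: Phi3_dvd | right; exact: Phi6_dvd].
have cq := divzK q_dvd.
rewrite n6E t6E; split.
- exact: mnt6_trace.
- exact: mnt6_Phi6_dvd.
- by move=> x; rewrite horner_mnt6_discr mnt6_discr_le0.
- by split; [apply: irreducible_n6 | apply: irreducible_p6].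
- move=> x D Y _ _ discr_x.
  by rewrite X6E -mulrA -discr_x horner_mnt6_discr !hornerE mnt6_cm_eq.
Qed.
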